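(* Let $\varrho,\sigma$ be density operators on a finite-dimensional Hilbert space and $\alpha>0$. If $\frac1nD_\alpha^{\mathrm{test}}(\varrho^{\otimes n}\|\sigma^{\otimes n})<\hat D_\alpha^{\mathrm{test}}(\varrho\|\sigma)$ for all $n\in\mathbb N$, then $\overline{D}_\alpha^{\mathrm{test}}(\varrho\|\sigma)=\hat D_\alpha^{\mathrm{test}}(\varrho\|\sigma)$. Equivalently, if $\overline{D}_\alpha^{\mathrm{test}}(\varrho\|\sigma)<\hat D_\alpha^{\mathrm{test}}(\varrho\|\sigma)$, then there exists $n\in\mathbb N$ with $\frac1nD_\alpha^{\mathrm{test}}(\varrho^{\otimes n}\|\sigma^{\otimes n})=\hat D_\alpha^{\mathrm{test}}(\varrho\|\sigma)$.
   Context: For probability vectors $p,q$, $D_\alpha$ is the classical Rényi divergence ($\frac{1}{\alpha-1}\log\sum_xp(x)^\alpha q(x)^{1-\alpha}$, with the usual conventions for $\alpha\ge1$). A test is an operator $0\le T\le I$; $\mathcal T(X):=(\operatorname{Tr}XT,\operatorname{Tr}X(I-T))$; $D_\alpha^{\mathrm{test}}(\varrho\|\sigma):=\sup_{0\le T\le I}D_\alpha(\mathcal T(\varrho)\|\mathcal T(\sigma))$; $\overline{D}_\alpha^{\mathrm{test}}:=\limsup_n\frac1nD_\alpha^{\mathrm{test}}(\varrho^{\otimes n}\|\sigma^{\otimes n})$; $\hat D_\alpha^{\mathrm{test}}:=\sup_n\frac1nD_\alpha^{\mathrm{test}}(\varrho^{\otimes n}\|\sigma^{\otimes n})$. *)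

From HB Require Import structures.
From mathcomp Require Import all_boot all_order all_algebra.
From mathcomp Require Import complex mxtens.
From mathcomp Require Import all_classical all_reals all_analysis.
Set Implicit Arguments. Unset Strict Implicit. Unset Printing Implicit Defensive.
Import Order.TTheory GRing.Theory Num.Theory.
Local Open Scope ring_scope.
Local Open Scope classical_set_scope.

Section Defs.
Variable R : realType.
Local Notation C := R[i].

Definition adjmx {m n : nat} (A : 'M[C]_(m, n)) : 'M[C]_(n, m) :=
  map_mx (fun z : C => (z^*)%C) A^T.

Definition psdmx {d : nat} (A : 'M[C]_d) : Prop :=
  forall v : 'cV[C]_d, 0 <= (adjmx v *m A *m v) 0 0.

Definition density {d : nat} (rho : 'M[C]_d) : Prop :=
  psdmx rho /\ \tr rho = 1.

Definition is_test {d : nat} (T : 'M[C]_d) : Prop :=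
  psdmx T /\ psdmx (1%:M - T).

(* the measurement channel X |-> (Tr X T, Tr X (I - T)), as a probability
   vector on 'I_2 (real parts; the traces are real for psd X and tests T) *)
Definition test_channel {d : nat} (T X : 'M[C]_d) : 'I_2 -> R :=
  fun k => if k == ord0 then complex.Re (\tr (X *m T))
           else complex.Re (\tr (X *m (1%:M - T))).

Definition abs_cont {I : finType} (p q : I -> R) : bool :=
  [forall x, (q x == 0) ==> (p x == 0)].

Definition renyi_cl {I : finType} (alpha : R) (p q : I -> R) : \bar R :=
  if alpha == 1 then
    (if abs_cont p q then
       (\sum_(x | 0 < p x) p x * ln (p x / q x))%:E
     else +oo)%E
  else if (1 < alpha) && ~~ abs_cont p q then +oo%E
  else
    let Q := \sum_x (p x `^ alpha * q x `^ (1 - alpha)) in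
    if Q == 0 then +oo%E else ((alpha - 1)^-1 * ln Q)%:E.

Definition Dtest {d : nat} (alpha : R) (rho sigma : 'M[C]_d) : \bar R :=
  ereal_sup [set renyi_cl alpha (test_channel T rho) (test_channel T sigma)
            | T in [set T : 'M[C]_d | is_test T]].

Definition Dtest_n {d : nat} (alpha : R) (rho sigma : 'M[C]_d) (n : nat) : \bar R :=
  ((n%:R)^-1)%:E * Dtest alpha (rho ^t n) (sigma ^t n).

(* regularized versions, n ranging over N = {1, 2, ...} *)
Definition Dtest_bar {d : nat} (alpha : R) (rho sigma : 'M[C]_d) : \bar R :=
  limn_esup (fun n => Dtest_n alpha rho sigma n.+1).

Definition Dtest_hat {d : nat} (alpha : R) (rho sigma : 'M[C]_d) : \bar R :=
  ereal_sup [set Dtest_n alpha rho sigma n.+1 | n in [set: nat]].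

End Defs.

From HB Require Import structures.
From mathcomp Require Import all_boot all_order all_algebra.
From mathcomp Require Import complex mxtens.
From mathcomp Require Import all_classical all_reals all_analysis.
Import Order.TTheory GRing.Theory Num.Theory.
Local Open Scope ring_scope.

(* The statement holds for every sequence u of extended reals, here
   u n = (1/(n+1)) D_alpha^test(rho^{(x)n+1} || sigma^{(x)n+1}): if no term
   attains S := sup_n u n, then every tail of u still has supremum S (dropping
   u n from a tail cannot lower its supremum below S, since u n < S), so the
   limsup, the infimum of the tail suprema, is S. *)

Section limn_esup_unattained_sup.
Local Open Scope ereal_scope.
Local Open Scope classical_set_scope.
Variables (R : realType) (u : (\bar R)^nat).

Lemma esups0 : esups u 0%N = ereal_sup (range u).
Proof. by congr ereal_sup; apply/seteqP; split=> _ [k _ <-]; exists k. Qed.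

Lemma esupsS n : esups u n = maxe (u n) (esups u n.+1).
Proof.
apply/eqP; rewrite eq_le; apply/andP; split.
- apply: ge_ereal_sup => _ [k /= nk <-]; rewrite le_max.
  move: nk; rewrite leq_eqVlt => /predU1P[->|ltnk]; first by rewrite lexx.
  by apply/orP; right; apply: ereal_sup_ubound; exists k.
- rewrite ge_max nonincreasing_esups // andbT.
  by apply: ereal_sup_ubound; exists n => /=.
Qed.

Lemma esups_unattained_sup :
  (forall n, u n < ereal_sup (range u)) ->
  forall n, esups u n = ereal_sup (range u).
Proof.
move=> u_lt_sup; elim=> [|n IHn]; first exact: esups0.
have sup_max : ereal_sup (range u) = maxe (u n) (esups u n.+1).
  by rewrite -IHn esupsS.
have := u_lt_sup n; rewrite sup_max lt_max ltxx /= => /ltW un_le.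
by rewrite max_r.
Qed.

Lemma limn_esup_unattained_sup :
  (forall n, u n < ereal_sup (range u)) ->
  limn_esup u = ereal_sup (range u).
Proof.
move=> u_lt_sup; rewrite limn_esup_lim.
by rewrite (funext (esups_unattained_sup u_lt_sup)) lim_cst.
Qed.

Lemma sup_attained_of_limn_esup_lt :
  limn_esup u < ereal_sup (range u) ->
  exists n, u n = ereal_sup (range u).
Proof.
move=> lt_sup; apply: contrapT => unattained.
suff u_lt_sup n : u n < ereal_sup (range u).
  by move: lt_sup; rewrite limn_esup_unattained_sup // ltxx.
rewrite lt_neqAle ereal_sup_ubound ?andbT; last by exists n.
by apply/eqP => attained; apply: unattained; exists n.
Qed.

End limn_esup_unattained_sup.

Theorem mainTheorem16 (R : realType) (d : nat) (rho sigma : 'M[R[i]]_d) (alpha : R) :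
  density rho -> density sigma -> 0 < alpha ->
  ((forall n : nat, (0 < n)%N ->
      (Dtest_n alpha rho sigma n < Dtest_hat alpha rho sigma)%E) ->
     Dtest_bar alpha rho sigma = Dtest_hat alpha rho sigma) /\
  ((Dtest_bar alpha rho sigma < Dtest_hat alpha rho sigma)%E ->
     exists2 n : nat, (0 < n)%N &
       Dtest_n alpha rho sigma n = Dtest_hat alpha rho sigma).
Proof.
move=> _ _ _; split=> [lt_hat | lt_bar].
- by apply: limn_esup_unattained_sup => n; apply: lt_hat.
- by have [n attained] := sup_attained_of_limn_esup_lt _ _ lt_bar; exists n.+1.
Qed.
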